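(* For every even integer $d\ge 4$ there exists a generalized bicycle code with parameters $[[d^2,2,d]]$ which is $(2,4)$-regular. All such codes are degenerate (having non-identity stabilizers of weight $4<d$), except when $d=4$.
   Context: For $a(x),b(x)\in R_n=\mathbb{F}_2[x]/\langle x^n-1\rangle$, the generalized bicycle (GB) code is the CSS code on $2n$ qubits whose X-check matrix $H_X$ has rows $x^i(a(x),b(x))$, $0\le i\le n-1$, and Z-check matrix $H_Z$ has rows $x^i(b(x^{-1}),a(x^{-1}))$ ($x^{-1}=x^{n-1}$); its minimum distance is the minimum weight of a Pauli operator commuting with all stabilizers but not in the stabilizer group. The code is $(2,4)$-regular if every row of $H_X$ and $H_Z$ has weight 4 and every column weight 2. A code of minimum distance $d$ is degenerate if its stabilizer group contains a non-identity element of weight less than $d$. *)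

From mathcomp Require Import all_boot all_order all_algebra.
Set Implicit Arguments. Unset Strict Implicit. Unset Printing Implicit Defensive.
Import GRing.Theory.
Local Open Scope ring_scope.

Lemma ord_pos n (j : 'I_n) : (0 < n)%N.
Proof. exact: leq_ltn_trans (leq0n j) (ltn_ord j). Qed.

Definition ord_subn n (j i : 'I_n) : 'I_n :=
  Ordinal (ltn_pmod (j + n - i) (ord_pos j)).

(* An element a(x) = sum_k a_k x^k of R_n = F_2[x]/<x^n - 1> is represented
   by its coefficient row vector (a_0, ..., a_{n-1}).
   circ a is the n x n matrix whose i-th row is the coefficient vector of
   x^i a(x), i.e. (circ a) i j = a_{(j - i) mod n}. *)
Definition circ n (a : 'rV['F_2]_n) : 'M['F_2]_n :=
  \matrix_(i, j) a 0 (ord_subn j i).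

Definition GB_HX n (a b : 'rV['F_2]_n) : 'M['F_2]_(n, n + n) :=
  row_mx (circ a) (circ b).

(* Rows x^i (b(x^{-1}), a(x^{-1})): the coefficient of x^j in x^i b(x^{-1})
   is b_{(i - j) mod n}, i.e. the transpose of circ b. *)
Definition GB_HZ n (a b : 'rV['F_2]_n) : 'M['F_2]_(n, n + n) :=
  row_mx (circ b)^T (circ a)^T.

Definition row_weight m N (H : 'M['F_2]_(m, N)) (i : 'I_m) : nat :=
  #|[set j : 'I_N | H i j != 0]|.
Definition col_weight m N (H : 'M['F_2]_(m, N)) (j : 'I_N) : nat :=
  #|[set i : 'I_m | H i j != 0]|.

Definition regular_code mx mz N (HX : 'M['F_2]_(mx, N)) (HZ : 'M['F_2]_(mz, N))
  (wr wc : nat) : Prop :=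
  [/\ forall i, row_weight HX i = wr, forall i, row_weight HZ i = wr,
      forall j, col_weight HX j = wc & forall j, col_weight HZ j = wc].

(* A Pauli operator on N qubits, up to phase, is X^x Z^z with x z : 'rV_N.
   Its weight is the number of qubits on which it acts non-trivially. *)
Definition pauli_weight N (x z : 'rV['F_2]_N) : nat :=
  #|[set j : 'I_N | (x 0 j != 0) || (z 0 j != 0)]|.

(* Stabilizer group of the CSS code (up to phase): generated by X^h for rows h
   of H_X and Z^h for rows h of H_Z. *)
Definition in_stabilizer mx mz N (HX : 'M['F_2]_(mx, N)) (HZ : 'M['F_2]_(mz, N))
  (x z : 'rV['F_2]_N) : Prop :=
  (x <= HX)%MS /\ (z <= HZ)%MS.

Definition commutes_with_stab mx mz N (HX : 'M['F_2]_(mx, N)) (HZ : 'M['F_2]_(mz, N))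
  (x z : 'rV['F_2]_N) : Prop :=
  z *m HX^T = 0 /\ x *m HZ^T = 0.

Definition logical_op mx mz N (HX : 'M['F_2]_(mx, N)) (HZ : 'M['F_2]_(mz, N))
  (x z : 'rV['F_2]_N) : Prop :=
  commutes_with_stab HX HZ x z /\ ~ in_stabilizer HX HZ x z.

Definition min_distance mx mz N (HX : 'M['F_2]_(mx, N)) (HZ : 'M['F_2]_(mz, N))
  (d : nat) : Prop :=
  (exists x z, logical_op HX HZ x z /\ pauli_weight x z = d) /\
  (forall x z, logical_op HX HZ x z -> (d <= pauli_weight x z)%N).

Definition css_params mx mz N (HX : 'M['F_2]_(mx, N)) (HZ : 'M['F_2]_(mz, N))
  (nq k d : nat) : Prop :=
  [/\ N = nq, (N - \rank HX - \rank HZ)%N = k & min_distance HX HZ d].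

Definition degenerate mx mz N (HX : 'M['F_2]_(mx, N)) (HZ : 'M['F_2]_(mz, N))
  (d : nat) : Prop :=
  exists x z, in_stabilizer HX HZ x z /\ (x != 0 \/ z != 0) /\
              (pauli_weight x z < d)%N.

(* Take [a = 1 + x] and [b = 1 + x^(d-1)] in [R_n], [n = d^2/2 = 2h^2].  The left
   kernels of [H_X] and [H_Z] are spanned by the all-ones vector, so both have
   rank [n - 1] and two qubits are encoded.  Because [a = 1 + x], every cyclic
   shift of an X-logical [L] differs from [L] by a stabilizer, so a Z-logical [z]
   anticommuting with [L] meets all [n] shifts of [L]; counting overlaps gives
   [n <= |z_1| |L_1| + |z_2| |L_2|] for the two halves.  Explicit X-logicals with
   half-weights [(h, h)], [(1, d-1)] and [(h+1, h-1)] turn this into [|z| >= d],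
   the reflection [x -> x^-1] exchanging the halves swaps the roles of X and Z,
   and an explicit logical of weight [d] shows the bound is attained.
   A row of [H_X] is a stabilizer of weight 4, hence degeneracy when [d > 4].
   For [d = 4], regularity makes [a] and [b] binomials over [n = 8]; a stabilizer
   [w (a, b)] of weight below 4 has a zero half, say [w a = 0], so [w] has period
   4, and then the weight of [w b] is a multiple of 4, hence [0]. *)

From mathcomp Require Import all_boot all_order all_algebra.
From mathcomp Require Import zify ring.
Set Implicit Arguments. Unset Strict Implicit. Unset Printing Implicit Defensive.
Import GRing.Theory.
Local Open Scope ring_scope.

Local Notation F2 := 'F_2.

Lemma pchar_F2 : 2%N \in [pchar F2].
Proof. exact: pchar_Fp. Qed.

Lemma F2_cases (x : F2) : x = 0 \/ x = 1.
Proof. by case: x => [[|[|//]]] ?; [left|right]; apply/val_inj. Qed.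

Lemma F2_natE k : (k%:R : F2) = (odd k)%:R.
Proof. by elim: k => // k IH; rewrite -natr1 IH /=; case: (odd k); apply/val_inj. Qed.

Lemma F2_nneqE (x : F2) : x = (x != 0)%:R.
Proof. by case: (F2_cases x) => ->. Qed.

Lemma F2_natb_neq0 (b : bool) : ((b%:R : F2) != 0) = b.
Proof. by case: b. Qed.

Lemma F2_natb_add_neq0 (b1 b2 : bool) : ((b1%:R + b2%:R : F2) != 0) = (b1 != b2).
Proof. by case: b1; case: b2. Qed.

Lemma F2_natr_even k : ~~ odd k -> (k%:R : F2) = 0.
Proof. by rewrite F2_natE => /negbTE ->. Qed.
Lemma F2_add_eq0 (x y : F2) : x + y = 0 -> x = y.
Proof. by move/eqP; rewrite addr_eq0 oppr_pchar2 ?pchar_F2 // => /eqP. Qed.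

Lemma F2_addmxx m n (A : 'M[F2]_(m, n)) : A + A = 0.
Proof. by apply/matrixP => i j; rewrite !mxE addrr_pchar2 ?pchar_F2. Qed.

(* In CSS terms: [H] and [G] are the X and Z check matrices, [L] a full set of
   X-logicals and [M] dual Z-logicals; a Z-type operator commuting with the X
   checks and with [L] is then a Z-stabilizer. *)
Section Orthogonality.
Variables (F : fieldType) (N k mH mG : nat).
Variables (H : 'M[F]_(mH, N)) (G : 'M[F]_(mG, N)) (L M : 'M[F]_(k, N)).
Hypotheses (GH : G *m H^T = 0) (LG : L *m G^T = 0) (MH : M *m H^T = 0).
Hypotheses (LM : L *m M^T = 1%:M) (rankHG : (\rank H + \rank G + k = N)%N).

Lemma rank_dual_basis : \rank L = k.
Proof.
apply/eqP; rewrite eqn_leq rank_leq_row /=.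
by rewrite -{1}(mxrank1 F k) -LM mxrankM_maxl.
Qed.

Lemma cap_dual_basis_eq0 : (H :&: L)%MS = 0.
Proof.
have /submxP [D eD] := capmxSr H L.
have /submxP [E eE] := capmxSl H L.
have : (H :&: L)%MS *m M^T = D by rewrite eD -mulmxA LM mulmx1.
rewrite {1}eE -mulmxA -[H *m M^T]trmxK trmx_mul trmxK MH trmx0 mulmx0.
by move=> D0; rewrite eD -D0 mul0mx.
Qed.

Lemma submx_of_orthogonal (z : 'rV[F]_N) :
  z *m H^T = 0 -> z *m L^T = 0 -> (z <= G)%MS.
Proof.
move=> zH zL; set S := col_mx H L.
have rankS : \rank S = (\rank H + k)%N.
  have := mxrank_sum_cap H L.
  by rewrite cap_dual_basis_eq0 mxrank0 addn0 rank_dual_basis -addsmxE.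
have GS : (G <= kermx S^T)%MS.
  rewrite sub_kermx tr_col_mx mul_mx_row GH.
  by rewrite -[G *m L^T]trmxK trmx_mul trmxK LG trmx0 row_mx0.
have zS : (z <= kermx S^T)%MS by rewrite sub_kermx tr_col_mx mul_mx_row zH zL row_mx0.
have rank_kerS : \rank (kermx S^T) = \rank G by rewrite mxrank_ker mxrank_tr rankS; lia.
apply: submx_trans zS _.
by have := (mxrank_leqif_sup GS).2; rewrite rank_kerS eqxx => <-.
Qed.

End Orthogonality.

Lemma rank_const_left_kernel (F : fieldType) N k (H : 'M[F]_(k.+1, N)) :
  (const_mx 1 : 'rV_k.+1) *m H = 0 ->
  (forall w : 'rV_k.+1, w *m H = 0 -> forall i, w 0 i = w 0 0) ->
  \rank H = k.
Proof.
move=> H1 Hc.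
have r1 : \rank (const_mx 1 : 'rV[F]_k.+1) = 1%N.
  rewrite rank_rV; case: eqP => // /rowP /(_ 0); rewrite !mxE => /eqP.
  by rewrite oner_eq0.
have sK : ((const_mx 1 : 'rV[F]_k.+1) <= kermx H)%MS by rewrite sub_kermx H1.
have Ks : (kermx H <= (const_mx 1 : 'rV[F]_k.+1))%MS.
  apply/row_subP => i.
  have Hw : row i (kermx H) *m H = 0 by rewrite -row_mul mulmx_ker row0.
  have -> : row i (kermx H) = (row i (kermx H)) 0 0 *: (const_mx 1 : 'rV[F]_k.+1).
    by apply/rowP => j; rewrite (Hc _ Hw j) [RHS]mxE [X in _ * X]mxE mulr1.
  exact: scalemx_sub.
have := (mxrank_leqif_sup sK).2; rewrite Ks r1 mxrank_ker => /eqP.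
by have := rank_leq_row H; lia.
Qed.

Lemma card_set_sum (T : finType) (P : pred T) : #|[set x | P x]| = (\sum_x (P x : nat))%N.
Proof. by rewrite -sum1dep_card big_mkcond; apply: eq_bigr => x _; case: (P x). Qed.

Definition wt N (u : 'rV[F2]_N) := #|[set j | u 0 j != 0]|.

Lemma wt_row_mx N1 N2 (u : 'rV[F2]_N1) (v : 'rV[F2]_N2) :
  wt (row_mx u v) = (wt u + wt v)%N.
Proof.
rewrite /wt !card_set_sum big_split_ord /=.
by congr (_ + _)%N; apply: eq_bigr => j _; rewrite ?row_mxEl ?row_mxEr.
Qed.

Lemma wt_eq0 N (u : 'rV[F2]_N) : wt u = 0%N -> u = 0.
Proof.
move/eqP; rewrite cards_eq0 => /eqP E; apply/rowP => j.
have : j \notin [set j | u 0 j != 0] by rewrite E inE.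
by rewrite inE negbK mxE => /eqP.
Qed.

Lemma wt_natr N (u : 'rV[F2]_N) : (wt u)%:R = \sum_k u 0 k.
Proof.
rewrite /wt card_set_sum natr_sum; apply: eq_bigr => k _.
by rewrite [RHS]F2_nneqE.
Qed.

Lemma wt_le_pauli_weightl N (x z : 'rV[F2]_N) : (wt x <= pauli_weight x z)%N.
Proof. by apply: subset_leq_card; apply/subsetP => j; rewrite !inE => ->. Qed.

Lemma wt_le_pauli_weightr N (x z : 'rV[F2]_N) : (wt z <= pauli_weight x z)%N.
Proof. by apply: subset_leq_card; apply/subsetP => j; rewrite !inE orbC => ->. Qed.

Definition dot N (x y : 'rV[F2]_N) : F2 := (x *m y^T) 0 0.

Lemma dotE N (x y : 'rV[F2]_N) : dot x y = \sum_j x 0 j * y 0 j.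
Proof. by rewrite /dot mxE; apply: eq_bigr => j _; rewrite mxE. Qed.

Lemma dotC N (x y : 'rV[F2]_N) : dot x y = dot y x.
Proof. by rewrite !dotE; apply: eq_bigr => j _; rewrite mulrC. Qed.

Lemma dotDr N (x y1 y2 : 'rV[F2]_N) : dot x (y1 + y2) = dot x y1 + dot x y2.
Proof. by rewrite !dotE -big_split; apply: eq_bigr => j _; rewrite mxE mulrDr. Qed.

Lemma dot_row_mx N1 N2 (u p : 'rV[F2]_N1) (v q : 'rV[F2]_N2) :
  dot (row_mx u v) (row_mx p q) = dot u p + dot v q.
Proof. by rewrite /dot tr_row_mx mul_row_col mxE. Qed.

Lemma dot_submx0 N mH (x y : 'rV[F2]_N) (H : 'M[F2]_(mH, N)) :
  x *m H^T = 0 -> (y <= H)%MS -> dot x y = 0.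
Proof. by move=> Hx /submxP [w ->]; rewrite /dot trmx_mul mulmxA Hx mul0mx mxE. Qed.

Lemma dot1_overlap N (x y : 'rV[F2]_N) :
  dot x y = 1 -> (0 < \sum_j ((x 0%R j != 0%R) && (y 0%R j != 0%R) : nat))%N.
Proof.
rewrite dotE => xy1; rewrite lt0n; apply/negP => /eqP /eqP.
rewrite sum_nat_eq0 => /forallP disj.
move: xy1; rewrite big1 => [/eqP|j _]; first by rewrite eq_sym oner_eq0.
have := disj j; rewrite eqb0 negb_and !negbK => /orP [] /eqP ->;
  by rewrite ?mul0r ?mulr0.
Qed.


Lemma dot_dual_basis N (A B C D : 'rV[F2]_N) :
  dot A C = 1 -> dot A D = 0 -> dot B C = 0 -> dot B D = 1 ->
  col_mx A B *m (col_mx C D)^T = 1%:M.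
Proof.
move=> AC AD BC BD; rewrite tr_col_mx mul_col_row.
rewrite [A *m _]mx11_scalar [A *m D^T]mx11_scalar [B *m _]mx11_scalar [B *m D^T]mx11_scalar.
rewrite -[(A *m C^T) 0 0]/(dot A C) -[(A *m D^T) 0 0]/(dot A D).
rewrite -[(B *m C^T) 0 0]/(dot B C) -[(B *m D^T) 0 0]/(dot B D) AC AD BC BD.
by rewrite raddf0 -scalar_mx_block.
Qed.

Lemma dot0_mul_tr_col_mx N (z A B : 'rV[F2]_N) :
  dot z A = 0 -> dot z B = 0 -> z *m (col_mx A B)^T = 0.
Proof.
move=> zA zB; rewrite tr_col_mx mul_mx_row [z *m A^T]mx11_scalar [z *m B^T]mx11_scalar.
rewrite -[(z *m A^T) 0 0]/(dot z A) -[(z *m B^T) 0 0]/(dot z B) zA zB.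
by rewrite raddf0 row_mx0.
Qed.


Lemma css_min_distance mx mz N (HX : 'M[F2]_(mx, N)) (HZ : 'M[F2]_(mz, N)) d z0 :
  (forall z, z *m HX^T = 0 -> ~~ (z <= HZ)%MS -> (d <= wt z)%N) ->
  (forall x, x *m HZ^T = 0 -> ~~ (x <= HX)%MS -> (d <= wt x)%N) ->
  z0 *m HX^T = 0 -> ~~ (z0 <= HZ)%MS -> (wt z0 <= d)%N -> min_distance HX HZ d.
Proof.
move=> boundZ boundX z0HX z0HZ wt_z0; split.
  exists 0, z0; split.
    by split; [split; [exact: z0HX | exact: mul0mx] | case=> _; apply/negP].
  have -> : pauli_weight 0 z0 = wt z0 by apply: eq_card => j; rewrite !inE mxE eqxx.
  by apply/eqP; rewrite eqn_leq wt_z0 boundZ.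
move=> x z [[zHX xHZ] not_stab]; case: (boolP (z <= HZ)%MS) => zHZ.
  have xHX : ~~ (x <= HX)%MS by apply/negP => xHX; apply: not_stab.
  exact: leq_trans (boundX _ xHZ xHX) (wt_le_pauli_weightl x z).
exact: leq_trans (boundZ _ zHX zHZ) (wt_le_pauli_weightr x z).
Qed.

Lemma regular_degenerate mx mz N (HX : 'M[F2]_(mx, N)) (HZ : 'M[F2]_(mz, N)) wc d :
  (0 < mx)%N -> regular_code HX HZ 4 wc -> (4 < d)%N -> degenerate HX HZ d.
Proof.
move=> mx_gt0 [rowX _ _ _] d_gt4; pose i0 := Ordinal mx_gt0.
have wt_row : pauli_weight (row i0 HX) 0 = 4%N.
  rewrite -(rowX i0) /pauli_weight /row_weight; apply: eq_card => j.
  by rewrite !inE !mxE eqxx orbF.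
exists (row i0 HX), 0; split; first by split; [exact: row_sub | exact: sub0mx].
split; last by rewrite wt_row.
left; apply/eqP => row0; move: wt_row; rewrite row0.
by rewrite /pauli_weight (eq_card (B := pred0)) ?card0 // => j; rewrite !inE !mxE eqxx.
Qed.

(** * Circulant matrices *)

Section Circulant.
Variable m : nat.
Local Notation n := m.+2.
Implicit Types (a b u v w p q : 'rV[F2]_n) (x z : 'rV[F2]_(n + n)) (i j k s t : 'I_n).

Lemma ord_subnE j i : ord_subn j i = j - i.
Proof. by apply: val_inj => /=; rewrite modnDmr addnBA // ltnW. Qed.

Lemma circE a i j : circ a i j = a 0 (j - i).
Proof. by rewrite mxE ord_subnE. Qed.

Lemma circD a b : circ (a + b) = circ a + circ b.
Proof. by apply/matrixP => i j; rewrite !mxE. Qed.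

Lemma mul_circE u a j : (u *m circ a) 0 j = \sum_i u 0 i * a 0 (j - i).
Proof. by rewrite mxE; apply: eq_bigr => i _; rewrite circE. Qed.

Lemma circC a b : circ a *m circ b = circ b *m circ a.
Proof.
apply/matrixP => i j; rewrite !mxE (reindex_inj (subrI (i + j))) /=.
by apply: eq_bigr => k _; rewrite !circE mulrC; congr (_ * _); congr (_ 0 _); ring.
Qed.

Definition refl u : 'rV[F2]_n := \row_j u 0 (- j).

Lemma reflK : involutive refl.
Proof. by move=> u; apply/rowP => j; rewrite !mxE opprK. Qed.

Lemma refl0 : refl 0 = 0.
Proof. by apply/rowP => j; rewrite !mxE. Qed.

Lemma tr_circ a : (circ a)^T = circ (refl a).
Proof. by apply/matrixP => i j; rewrite [LHS]mxE !circE mxE opprB. Qed.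

Lemma refl_mul_tr_circ u a : refl u *m (circ a)^T = refl (u *m circ a).
Proof.
apply/rowP => j; rewrite tr_circ mul_circE mxE mul_circE (reindex_inj oppr_inj) /=.
by apply: eq_bigr => i _; rewrite !mxE opprK; congr (_ * _); congr (_ 0 _); ring.
Qed.

Lemma refl_mul_circ u a : refl u *m circ a = refl (u *m (circ a)^T).
Proof. by rewrite -{2}[u]reflK refl_mul_tr_circ reflK. Qed.


Lemma GB_HZ_HX_tr a b : GB_HZ a b *m (GB_HX a b)^T = 0.
Proof.
rewrite /GB_HZ /GB_HX tr_row_mx mul_row_col -!trmx_mul circC.
exact: F2_addmxx.
Qed.

Lemma GB_HX_HZ_tr a b : GB_HX a b *m (GB_HZ a b)^T = 0.
Proof. by rewrite -[LHS]trmxK trmx_mul trmxK GB_HZ_HX_tr trmx0. Qed.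

Lemma mul_GB_HX a b w : w *m GB_HX a b = row_mx (w *m circ a) (w *m circ b).
Proof. by rewrite /GB_HX mul_mx_row. Qed.

Lemma mul_GB_HZ a b w :
  w *m GB_HZ a b = row_mx (w *m (circ b)^T) (w *m (circ a)^T).
Proof. by rewrite /GB_HZ mul_mx_row. Qed.

Lemma mul_GB_HX_tr a b u v :
  row_mx u v *m (GB_HX a b)^T = u *m (circ a)^T + v *m (circ b)^T.
Proof. by rewrite /GB_HX tr_row_mx mul_row_col. Qed.

Lemma mul_GB_HZ_tr a b p q :
  row_mx p q *m (GB_HZ a b)^T = p *m circ b + q *m circ a.
Proof. by rewrite /GB_HZ tr_row_mx !trmxK mul_row_col. Qed.

Definition monomial c : 'rV[F2]_n := \row_k (k == c)%:R.

Lemma mul_circ_monomial u s j : (u *m circ (monomial s)) 0 j = u 0 (j - s).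
Proof.
rewrite mul_circE (bigD1 (j - s)) //= !mxE opprB addrCA subrr addr0 eqxx mulr1.
rewrite big1 ?addr0 // => i /negbTE ne_i; rewrite !mxE.
suff -> : (j - i == s) = false by rewrite mulr0.
by apply: contraFF ne_i => /eqP <-; rewrite opprB addrCA subrr addr0.
Qed.

Lemma mul_tr_circ_monomial u s i : (u *m (circ (monomial s))^T) 0 i = u 0 (i + s).
Proof.
rewrite -[u]reflK refl_mul_tr_circ mxE mul_circ_monomial !mxE.
by congr (u 0 _); ring.
Qed.

Lemma mul_circ_binom u s t j :
  (u *m circ (monomial s + monomial t)) 0 j = u 0 (j - s) + u 0 (j - t).
Proof. by rewrite circD mulmxDr mxE !mul_circ_monomial. Qed.

Lemma mul_tr_circ_binom u s t i :
  (u *m (circ (monomial s + monomial t))^T) 0 i = u 0 (i + s) + u 0 (i + t).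
Proof. by rewrite circD linearD mulmxDr mxE !mul_tr_circ_monomial. Qed.

Definition shift s u := u *m circ (monomial s).

Lemma shiftE s u j : shift s u 0 j = u 0 (j - s).
Proof. exact: mul_circ_monomial. Qed.

Lemma shift0 u : shift 0 u = u.
Proof. by apply/rowP => j; rewrite shiftE subr0. Qed.

Lemma shiftD s t u : shift (s + t) u = shift s (shift t u).
Proof. by apply/rowP => j; rewrite !shiftE opprD addrA addrAC. Qed.

Lemma shift_mul_circ s u a : shift s u *m circ a = shift s (u *m circ a).
Proof. by rewrite /shift -!mulmxA circC. Qed.


Lemma shift_mul_GB_HZ_tr s a b p q :
  row_mx (shift s p) (shift s q) *m (GB_HZ a b)^T =
  shift s (row_mx p q *m (GB_HZ a b)^T).
Proof. by rewrite !mul_GB_HZ_tr !shift_mul_circ /shift mulmxDl. Qed.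

Lemma sum_overlap_shift u v :
  (\sum_s \sum_j ((u 0%R j != 0%R) && (shift s v 0%R j != 0%R) : nat) = wt u * wt v)%N.
Proof.
rewrite exchange_big /wt card_set_sum big_distrl /=; apply: eq_bigr => j _.
case: (u 0 j != 0) => /=; last by rewrite big1 // mul0n.
rewrite mul1n card_set_sum (reindex_inj (subrI j)) /=.
by apply: eq_bigr => s _; rewrite shiftE opprB addrCA subrr addr0.
Qed.

(* Summed over all [n] shifts, the overlaps with [(zl, zr)] add up to
   [wt zl * wt p + wt zr * wt q], and each of them is nonempty. *)
Lemma shift_overlap_bound zl zr p q :
  (forall s, dot (row_mx zl zr) (row_mx (shift s p) (shift s q)) = 1) ->
  (n <= wt zl * wt p + wt zr * wt q)%N.
Proof.
move=> pair1; rewrite -!sum_overlap_shift -big_split /=.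
rewrite -[X in (X <= _)%N]card_ord -sum1_card; apply: leq_sum => s _.
have := dot1_overlap (pair1 s); rewrite big_split_ord /=.
under eq_bigr => j _ do rewrite !row_mxEl.
by under [X in (_ + X)%N]eq_bigr => j _ do rewrite !row_mxEr.
Qed.

Lemma reflD u v : refl (u + v) = refl u + refl v.
Proof. by apply/rowP => j; rewrite !mxE. Qed.

Lemma wt_refl u : wt (refl u) = wt u.
Proof.
rewrite /wt !card_set_sum (reindex_inj oppr_inj) /=.
by apply: eq_bigr => j _; rewrite mxE opprK.
Qed.

Definition mirror (x : 'rV[F2]_(n + n)) := row_mx (refl (rsubmx x)) (refl (lsubmx x)).

Lemma mirror_row_mx p q : mirror (row_mx p q) = row_mx (refl q) (refl p).
Proof. by rewrite /mirror row_mxKl row_mxKr. Qed.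

Lemma mirrorK : involutive mirror.
Proof. by move=> x; rewrite /mirror row_mxKl row_mxKr !reflK hsubmxK. Qed.

Lemma wt_mirror x : wt (mirror x) = wt x.
Proof. by rewrite -{2}(hsubmxK x) /mirror !wt_row_mx !wt_refl addnC. Qed.

Lemma mirror_mul_GB_HX_tr a b x :
  mirror x *m (GB_HX a b)^T = refl (x *m (GB_HZ a b)^T).
Proof.
rewrite -(hsubmxK x) mirror_row_mx mul_GB_HX_tr mul_GB_HZ_tr.
by rewrite !refl_mul_tr_circ reflD addrC.
Qed.

Lemma mirror_mul_GB_HZ a b w : mirror (w *m GB_HZ a b) = refl w *m GB_HX a b.
Proof. by rewrite mul_GB_HZ mirror_row_mx mul_GB_HX !refl_mul_circ. Qed.

Lemma mirror_logicalX a b x :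
  x *m (GB_HZ a b)^T = 0 -> ~~ (x <= GB_HX a b)%MS ->
  mirror x *m (GB_HX a b)^T = 0 /\ ~~ (mirror x <= GB_HZ a b)%MS.
Proof.
move=> xHZ nx; split; first by rewrite mirror_mul_GB_HX_tr xHZ refl0.
apply: contra nx => /submxP [w xE].
by rewrite -[x]mirrorK xE mirror_mul_GB_HZ submxMl.
Qed.

Lemma circ_binomE s t i j :
  circ (monomial s + monomial t) i j = (j - i == s)%:R + (j - i == t)%:R.
Proof. by rewrite circE !mxE. Qed.


Lemma card_row_circ_binom s t i : s != t ->
  #|[set j | circ (monomial s + monomial t) i j != 0]| = 2%N.
Proof.
move=> st; suff -> : [set j | circ (monomial s + monomial t) i j != 0] = [set i + s; i + t].
  by rewrite cards2 (inj_eq (addrI i)) st.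
apply/setP => j; rewrite !inE circ_binomE F2_natb_add_neq0 ![j - i == _]subr_eq ![_ + i]addrC.
case: (j =P i + s) => [e1|_]; case: (j =P i + t) => [e2|_] //=.
by move: st; rewrite (addrI i (etrans (esym e1) e2)) eqxx.
Qed.

Lemma card_col_circ_binom s t j : s != t ->
  #|[set i | circ (monomial s + monomial t) i j != 0]| = 2%N.
Proof.
move=> st; suff -> : [set i | circ (monomial s + monomial t) i j != 0] = [set j - s; j - t].
  by rewrite cards2 (inj_eq (subrI j)) st.
apply/setP => i; rewrite !inE circ_binomE F2_natb_add_neq0.
have E k : (j - i == k) = (i == j - k) by rewrite subr_eq addrC -subr_eq eq_sym.
rewrite !E; case: (i =P j - s) => [e1|_]; case: (i =P j - t) => [e2|_] //=.
by move: st; rewrite (subrI j (etrans (esym e1) e2)) eqxx.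
Qed.

Lemma GB_binom_regular s t s' t' : s != t -> s' != t' ->
  regular_code (GB_HX (monomial s + monomial t) (monomial s' + monomial t'))
               (GB_HZ (monomial s + monomial t) (monomial s' + monomial t')) 4 2.
Proof.
move=> st st'; split => [i|i|j|j]; rewrite /row_weight /col_weight.
- rewrite card_set_sum big_split_ord /=.
  under eq_bigr => j _ do rewrite row_mxEl.
  under [X in (_ + X)%N]eq_bigr => j _ do rewrite row_mxEr.
  by rewrite -!card_set_sum !card_row_circ_binom.
- rewrite card_set_sum big_split_ord /=.
  under eq_bigr => j _ do rewrite row_mxEl mxE.
  under [X in (_ + X)%N]eq_bigr => j _ do rewrite row_mxEr mxE.
  by rewrite -!card_set_sum !card_col_circ_binom.
- case: (split_ordP j) => k ->.
    by under eq_finset => i do rewrite row_mxEl; rewrite card_col_circ_binom.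
  by under eq_finset => i do rewrite row_mxEr; rewrite card_col_circ_binom.
- case: (split_ordP j) => k ->.
    by under eq_finset => i do rewrite row_mxEl mxE; rewrite card_row_circ_binom.
  by under eq_finset => i do rewrite row_mxEr mxE; rewrite card_row_circ_binom.
Qed.

Lemma regular_GB_wt a b :
  regular_code (GB_HX a b) (GB_HZ a b) 4 2 -> wt a = 2%N /\ wt b = 2%N.
Proof.
case=> _ _ colX _.
have col0 u : #|[set i | circ u i 0 != 0]| = wt u.
  rewrite /wt !card_set_sum (reindex_inj oppr_inj) /=.
  by apply: eq_bigr => i _; rewrite circE sub0r opprK.
split.
  have := colX (lshift _ 0); rewrite /col_weight /GB_HX.
  by under eq_finset => i do rewrite row_mxEl; rewrite col0.
have := colX (rshift _ 0); rewrite /col_weight /GB_HX.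
by under eq_finset => i do rewrite row_mxEr; rewrite col0.
Qed.

Lemma wt2_binom u : wt u = 2%N -> exists s t, s != t /\ u = monomial s + monomial t.
Proof.
move/eqP/cards2P => [s [t [st E]]]; exists s, t; split => //.
apply/rowP => k; rewrite !mxE [LHS]F2_nneqE.
have : (k \in [set j | u 0 j != 0]) = (k \in [set s; t]) by rewrite E.
rewrite !inE => ->.
case: (k =P s) => [ks|_]; case: (k =P t) => [kt|_] //=; rewrite ?addr0 ?add0r //.
by move: st; rewrite -ks kt eqxx.
Qed.

Lemma mul_GB_HX_tr_binomE sa ta sb tb u v i :
  (row_mx u v *m (GB_HX (monomial sa + monomial ta) (monomial sb + monomial tb))^T) 0 i =
  u 0 (i + sa) + u 0 (i + ta) + v 0 (i + sb) + v 0 (i + tb).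
Proof. by rewrite mul_GB_HX_tr [LHS]mxE !mul_tr_circ_binom addrA. Qed.

Lemma mul_GB_HZ_tr_binomE sa ta sb tb p q j :
  (row_mx p q *m (GB_HZ (monomial sa + monomial ta) (monomial sb + monomial tb))^T) 0 j =
  p 0 (j - sb) + p 0 (j - tb) + q 0 (j - sa) + q 0 (j - ta).
Proof. by rewrite mul_GB_HZ_tr [LHS]mxE !mul_circ_binom addrA. Qed.

End Circulant.

(** * Generalized bicycle codes with [a = 1 + x] *)

Section OnePlusX.
Variables (m : nat) (c : 'I_m.+2).
Local Notation n := m.+2.
Local Notation a := (monomial 0 + monomial 1 : 'rV[F2]_n).
Local Notation b := (monomial 0 + monomial c : 'rV[F2]_n).
Local Notation HX := (GB_HX a b).
Local Notation HZ := (GB_HZ a b).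
Implicit Types (u w p q : 'rV[F2]_n) (z : 'rV[F2]_(n + n)) (s : 'I_n).

Lemma shift1_add_logical p q :
  row_mx p q *m HZ^T = 0 -> row_mx (shift 1 p) (shift 1 q) + row_mx p q = p *m HX.
Proof.
move=> pq0; rewrite mul_GB_HX add_row_mx; congr row_mx; apply/rowP => j;
  rewrite [LHS]mxE mul_circ_binom !shiftE subr0 1?addrC //.
apply: F2_add_eq0; have := congr1 (fun r : 'rV_n => r 0 j) pq0.
by rewrite mul_GB_HZ_tr_binomE mxE !subr0 => <-; ring.
Qed.

(* Since [a = 1 + x], multiplying by [x] changes an X-logical by a stabilizer. *)
Lemma shift_add_logical_sub p q s :
  row_mx p q *m HZ^T = 0 -> ((row_mx (shift s p) (shift s q) + row_mx p q)%R <= HX)%MS.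
Proof.
move=> pq0; rewrite -[s]natr_Zp; elim: (nat_of_ord s) => [|k IH].
  by rewrite mulr0n !shift0 F2_addmxx sub0mx.
have shiftS u : shift k.+1%:R u = shift 1 (shift k%:R u) by rewrite -shiftD addrC natr1.
set v := row_mx (shift k%:R p) (shift k%:R q).
have -> : row_mx (shift k.+1%:R p) (shift k.+1%:R q) + row_mx p q =
          (row_mx (shift 1 (shift k%:R p)) (shift 1 (shift k%:R q)) + v) + (v + row_mx p q).
  by rewrite !shiftS addrA -(addrA _ v v) F2_addmxx addr0.
rewrite addmx_sub // shift1_add_logical ?submxMl //.
by rewrite shift_mul_GB_HZ_tr pq0 /shift mul0mx.
Qed.

Lemma dot_shift_logical z p q s :
  z *m HX^T = 0 -> row_mx p q *m HZ^T = 0 ->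
  dot z (row_mx (shift s p) (shift s q)) = dot z (row_mx p q).
Proof.
move=> zHX pq0; apply: F2_add_eq0; rewrite -dotDr.
exact: dot_submx0 zHX (shift_add_logical_sub s pq0).
Qed.

Lemma rank_HX : \rank HX = m.+1.
Proof.
apply: rank_const_left_kernel.
  rewrite mul_GB_HX; apply/eqP; rewrite -row_mx0; apply/eqP; congr row_mx;
  by apply/rowP => j; rewrite mul_circ_binom !mxE addrr_pchar2 ?pchar_F2.
move=> w; rewrite mul_GB_HX => /eqP; rewrite -row_mx0 => /eqP /eq_row_mx [wa _] i.
have w_pred j : w 0 j = w 0 (j - 1).
  by apply: F2_add_eq0; have := congr1 (fun r : 'rV_n => r 0 j) wa;
    rewrite mul_circ_binom subr0 mxE.
rewrite -[i]natr_Zp; elim: (nat_of_ord i) => // k IH.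
by rewrite w_pred -natr1 addrK.
Qed.

Lemma rank_HZ : \rank HZ = m.+1.
Proof.
apply: rank_const_left_kernel.
  rewrite mul_GB_HZ; apply/eqP; rewrite -row_mx0; apply/eqP; congr row_mx;
  by apply/rowP => j; rewrite mul_tr_circ_binom !mxE addrr_pchar2 ?pchar_F2.
move=> w; rewrite mul_GB_HZ => /eqP; rewrite -row_mx0 => /eqP /eq_row_mx [_ wa] i.
have w_succ j : w 0 (j + 1) = w 0 j.
  by symmetry; apply: F2_add_eq0; have := congr1 (fun r : 'rV_n => r 0 j) wa;
    rewrite mul_tr_circ_binom addr0 mxE.
rewrite -[i]natr_Zp; elim: (nat_of_ord i) => // k IH.
by rewrite -natr1 w_succ.
Qed.

Lemma logical_overlap_bound z L wl wr :
  z *m HX^T = 0 -> L *m HZ^T = 0 -> dot z L = 1 ->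
  (wt (lsubmx L) <= wl)%N -> (wt (rsubmx L) <= wr)%N ->
  (n <= wt (lsubmx z) * wl + wt (rsubmx z) * wr)%N.
Proof.
move=> zHX LHZ zL Ll Lr.
apply: leq_trans (leq_add (leq_mul (leqnn _) Ll) (leq_mul (leqnn _) Lr)).
move: zHX LHZ zL; rewrite -(hsubmxK L) -(hsubmxK z) !row_mxKl !row_mxKr => zHX LHZ zL.
by apply: shift_overlap_bound => s; rewrite dot_shift_logical.
Qed.

Lemma rank_HX_HZ : (\rank HX + \rank HZ + 2 = n + n)%N.
Proof. by rewrite rank_HX rank_HZ; lia. Qed.

End OnePlusX.


(** * The codes with [n = 2 h^2] and [b = 1 + x^(2h - 1)] *)

Lemma modnDB_cases N j k : (j < N)%N -> (k <= N)%N ->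
  ((j + (N - k)) %% N = if (j < k)%N then j + N - k else j - k)%N.
Proof.
move=> jN kN; case: ifP => jk; first by rewrite modn_small; lia.
have -> : (j + (N - k) = (j - k) + N)%N by lia.
by rewrite modnDr modn_small; lia.
Qed.

Lemma modnD_cases N j k : (j < N)%N -> (k < N)%N ->
  ((j + k) %% N = if (j + k < N)%N then j + k else j + k - N)%N.
Proof.
move=> jN kN; case: ifP => jk; first by rewrite modn_small.
have -> : (j + k = (j + k - N) + N)%N by lia.
by rewrite modnDr modn_small; lia.
Qed.

Ltac case_nat_tests := repeat match goal with
 | |- context [ if ?b then _ else _ ] => let H := fresh "H" in case: ifP => H
 | |- context [ (?x == ?y)%N ] => let H := fresh "H" in case: (boolP (x == y)%N) => H
 | |- context [ (?x < ?y)%N ] => let H := fresh "H" in case: (boolP (x < y)%N) => H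
 | |- context [ (?x <= ?y)%N ] => let H := fresh "H" in case: (boolP (x <= y)%N) => H
 end.

Lemma overlap_bounds_sum h N wl wr : (2 <= h)%N -> N = (2 * h * h)%N ->
  (N <= wl * 1 + wr * (2 * h - 1))%N -> (N <= wl * h.+1 + wr * (h - 1))%N ->
  (2 * h <= wl + wr)%N.
Proof. move=> *; nia. Qed.

Section Construction.
Variables h m : nat.
Hypothesis h_ge2 : (2 <= h)%N.
Hypothesis n_eq : m.+2 = (2 * h * h)%N.
Local Notation n := m.+2.
Local Notation d := (2 * h)%N.

Lemma d_pred_lt_n : (d - 1 < n)%N.
Proof. rewrite n_eq; nia. Qed.

Lemma d_add2_le_n : (d + 2 <= n)%N.
Proof. nia. Qed.

Lemma d_dvd_n : (d %| n)%N.
Proof. by rewrite n_eq dvdn_mulr. Qed.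

Definition c_d : 'I_n := Ordinal d_pred_lt_n.
Local Notation a := (monomial 0 + monomial 1 : 'rV[F2]_n).
Local Notation b := (monomial 0 + monomial c_d : 'rV[F2]_n).
Local Notation HX := (GB_HX a b).
Local Notation HZ := (GB_HZ a b).

Lemma val_ord1 : val (1 : 'I_n) = 1%N.
Proof. by rewrite /= modn_small. Qed.

Lemma val_ordB (j k : 'I_n) : val (j - k) = ((j + (n - k)) %% n)%N.
Proof. by rewrite /= modnDmr. Qed.

Lemma val_ordD (j k : 'I_n) : val (j + k) = ((j + k) %% n)%N.
Proof. by []. Qed.

Definition indic (P : pred nat) : 'rV[F2]_n := \row_j (P j)%:R.

(* The logical operators, as pairs of polynomials in [x], are
   [Ldiag = (x sum_i x^(d i), sum_i x^(d i))] for [i < h],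
   [Lline = (1, 1 + ... + x^(d-2))],
   [Lsparse = (sum_(i <= h) x^((d-1) i), 1 + ... + x^(h-2))] and
   [Mmin = (x + ... + x^(d-1), x^(d-1))]. *)
Definition Ldiag := row_mx (indic (fun j => j %% d == 1)%N) (indic (fun j => j %% d == 0)%N).
Definition Lline := row_mx (indic (fun j => j == 0)%N) (indic (fun j => j < d - 1)%N).
Definition Lsparse :=
  row_mx (indic (fun j => (j %% (d - 1) == 0) && (j %/ (d - 1) <= h))%N)
         (indic (fun j => j < h - 1)%N).
Definition Mmin := row_mx (indic (fun j => 0 < j < d)%N) (indic (fun j => j == d - 1)%N).

Lemma diag_parity r : (r < d)%N ->
  ~~ odd ((r == 1)%N + ((r + 1) %% d == 1)%N + (r == 0)%N + ((r + (d - 1)) %% d == 0)%N).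
Proof.
move=> rd; case: r rd => [|[|r]] rd.
- by rewrite add0n !modn_small //=; lia.
- have -> : (1 + (d - 1) = d)%N by lia.
  by rewrite modnn modn_small //; lia.
- have e1 : ((r.+2 + 1) %% d == 1)%N = false.
    case: (ltnP (r.+3) d) => H; first by rewrite addn1 modn_small.
    have -> : (r.+2 + 1 = d)%N by lia.
    by rewrite modnn.
  have e2 : ((r.+2 + (d - 1)) %% d == 0)%N = false.
    have -> : (r.+2 + (d - 1) = r.+1 + d)%N by lia.
    by rewrite modnDr modn_small //; lia.
  by rewrite e1 e2.
Qed.

Lemma Ldiag_orth_HZ : Ldiag *m HZ^T = 0.
Proof.
apply/rowP => j; rewrite mul_GB_HZ_tr_binomE !subr0 !mxE !val_ordB val_ord1 /=.
rewrite !modn_dvdm ?d_dvd_n // -!natrD F2_natr_even //.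
have -> : (j + (n - (d - 1)) = (h - 1) * d + (j + 1))%N by nia.
have -> : (j + (n - 1) = (h - 1) * d + (j + (d - 1)))%N by nia.
rewrite !modnMDl -(modnDml j 1) -(modnDml j (d - 1)).
by apply: diag_parity; rewrite ltn_mod; lia.
Qed.

Lemma Ldiag_orth_HX : Ldiag *m HX^T = 0.
Proof.
apply/rowP => j; rewrite mul_GB_HX_tr_binomE !addr0 !mxE !val_ordD val_ord1 /=.
rewrite !modn_dvdm ?d_dvd_n // -!natrD F2_natr_even //.
rewrite -(modnDml j 1) -(modnDml j (d - 1)).
by apply: diag_parity; rewrite ltn_mod; lia.
Qed.

Lemma Lline_orth_HZ : Lline *m HZ^T = 0.
Proof.
apply/rowP => j; rewrite mul_GB_HZ_tr_binomE !subr0 !mxE !val_ordB val_ord1 /=.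
rewrite -!natrD F2_natr_even //.
have := d_add2_le_n; have := ltn_ord j.
rewrite !modnDB_cases //; try nia.
move: (nat_of_ord j) => k *; case_nat_tests => //; lia.
Qed.

Lemma Mmin_orth_HX : Mmin *m HX^T = 0.
Proof.
apply/rowP => j; rewrite mul_GB_HX_tr_binomE !addr0 !mxE !val_ordD val_ord1 /=.
rewrite -!natrD F2_natr_even //.
have := d_add2_le_n; have := ltn_ord j.
rewrite !modnD_cases //; try nia.
move: (nat_of_ord j) => k *; case_nat_tests => //; lia.
Qed.

Lemma sparse_low k : (k < d - 1)%N ->
  (((k + n - (d - 1)) %% (d - 1) == 0) && ((k + n - (d - 1)) %/ (d - 1) <= h))%N =
  (k == h - 1)%N.
Proof.
move=> kc.
have -> : (k + n - (d - 1) = (h - 1) * (d - 1) + (k + h))%N by nia.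
rewrite modnMDl divnMDl; last by lia.
case: (ltnP (k + h) (d - 1)) => H.
  rewrite modn_small // divn_small //; lia.
have -> : (k + h = (k + h - (d - 1)) + (d - 1))%N by lia.
rewrite modnDr divnDr ?dvdnn // divnn modn_small; last by lia.
rewrite divn_small; last by lia.
apply/idP/idP; lia.
Qed.

Lemma sparse_div_le k : (k < n)%N -> (k %/ (d - 1) <= h)%N.
Proof. move=> kn; rewrite -ltnS ltn_divLR; last by lia. nia. Qed.

Lemma sparse_high k : (d - 1 <= k)%N -> (k < n)%N ->
  (((k - (d - 1)) %% (d - 1) == 0) && ((k - (d - 1)) %/ (d - 1) <= h))%N =
  (k %% (d - 1) == 0)%N.
Proof.
move=> ck kn; have hk := sparse_div_le kn.
have E : (k = (k - (d - 1)) + (d - 1))%N by lia.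
rewrite {3}E modnDr.
have -> : ((k - (d - 1)) %/ (d - 1) <= h)%N.
  by apply: leq_trans hk; apply: leq_div2r; lia.
by rewrite andbT.
Qed.

Lemma Lsparse_orth_HZ : Lsparse *m HZ^T = 0.
Proof.
apply/rowP => j; rewrite mul_GB_HZ_tr_binomE !subr0 !mxE !val_ordB val_ord1 /=.
rewrite -!natrD F2_natr_even //.
have := d_add2_le_n; have := ltn_ord j.
rewrite !modnDB_cases //; try nia.
move: (nat_of_ord j) => k kn nb.
case: (ltnP k (d - 1)) => kc.
  rewrite sparse_low // modn_small // divn_small //.
  case_nat_tests => //; lia.
rewrite sparse_high // (sparse_div_le kn) andbT.
case_nat_tests => //; lia.
Qed.

Lemma dot_indic (P Q : pred nat) :
  dot (indic P) (indic Q) = \sum_(j : 'I_n) ((P j && Q j) : nat)%:R.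
Proof. by rewrite dotE; apply: eq_bigr => j _; rewrite !mxE -natrM mulnb. Qed.

Lemma dot_indic1 (P Q : pred nat) k : (k < n)%N ->
  (forall j, (j < n)%N -> (P j && Q j) = (j == k)%N) -> dot (indic P) (indic Q) = 1.
Proof.
move=> kn PQ; rewrite dot_indic (bigD1 (Ordinal kn)) //= PQ // eqxx big1 ?addr0 //.
move=> j jk; rewrite PQ //; case: eqP => // E.
by move: jk; rewrite -val_eqE /= E eqxx.
Qed.

Lemma dot_indic0 (P Q : pred nat) :
  (forall j, (j < n)%N -> (P j && Q j) = false) -> dot (indic P) (indic Q) = 0.
Proof. by move=> PQ; rewrite dot_indic big1 // => j _; rewrite PQ. Qed.

Lemma dot_Ldiag_Mmin : dot Ldiag Mmin = 1.
Proof.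
rewrite dot_row_mx [dot (indic _) (indic (fun j => j == d - 1)%N)]dot_indic0 ?addr0.
  apply: (dot_indic1 (k := 1%N)); first by lia.
  move=> j jn; case: (ltnP j d) => jd.
    by rewrite modn_small //; case_nat_tests => //; lia.
  by case_nat_tests => //; lia.
move=> j jn; apply/negP => /andP [/eqP H1 /eqP H2]; move: H1; rewrite H2 modn_small; lia.
Qed.

Lemma dot_Lline_Mmin : dot Lline Mmin = 0.
Proof. by rewrite dot_row_mx !dot_indic0 ?addr0 // => j jn; case_nat_tests => //; lia. Qed.

Lemma dot_Lline_Ldiag : dot Lline Ldiag = 1.
Proof.
rewrite dot_row_mx [dot (indic (fun j => j == 0)%N) _]dot_indic0 ?add0r.
  apply: (dot_indic1 (k := 0%N)); first by lia.
  move=> j jn; case: (ltnP j d) => jd.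
    by rewrite modn_small //; case_nat_tests => //; lia.
  by case_nat_tests => //; lia.
by move=> j jn; case: eqP => //= ->; rewrite mod0n.
Qed.

Lemma dot_Lsparse_Mmin : dot Lsparse Mmin = 1.
Proof.
rewrite dot_row_mx [dot (indic (fun j => j < h - 1)%N) _]dot_indic0 ?addr0.
  apply: (dot_indic1 (k := (d - 1)%N)); first by nia.
  move=> j jn; case: (ltnP j (d - 1)) => jc.
    by rewrite modn_small //; case_nat_tests => //; lia.
  case: (ltnP j d) => jd.
    have -> : j = (d - 1)%N by lia.
    by rewrite modnn divnn; case_nat_tests => //; lia.
  by case_nat_tests => //; lia.
by move=> j jn; case_nat_tests => //; lia.
Qed.

Lemma dot_Lsparse_Ldiag : dot Lsparse Ldiag = 1.
Proof.
rewrite dot_row_mx [dot (indic (fun j => _ && _)%N) _]dot_indic0 ?add0r.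
  apply: (dot_indic1 (k := 0%N)); first by lia.
  move=> j jn; case: (ltnP j d) => jd.
    by rewrite modn_small //; case_nat_tests => //; lia.
  by case_nat_tests => //; lia.
move=> j jn; apply/negP => /andP [/andP [/eqP jc jh]] /eqP j1.
have Ej : j = (j %/ (d - 1) * (d - 1))%N by rewrite {1}(divn_eq j (d - 1)) jc addn0.
move: (j %/ (d - 1))%N Ej jh => k Ej jh.
have : ((k * (d - 1) + k) %% d = 0)%N.
  have -> : (k * (d - 1) + k = k * d)%N by nia.
  by rewrite modnMl.
rewrite -modnDml -Ej j1.
case: k Ej jh => [|k] Ej jh.
  by move: j1; rewrite Ej mul0n mod0n.
rewrite modn_small; lia.
Qed.

Lemma dot_Ldiag_Ldiag : dot Ldiag Ldiag = 0.
Proof.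
rewrite dot_row_mx !dot_indic.
under eq_bigr => j _ do rewrite andbb.
under [X in _ + X]eq_bigr => j _ do rewrite andbb.
suff -> : \sum_(j : 'I_n) (((j %% d == 1)%N : nat)%:R : F2) =
          \sum_(j : 'I_n) (((j %% d == 0)%N : nat)%:R) by rewrite addrr_pchar2 ?pchar_F2.
rewrite (reindex_inj (addrI 1)) /=; apply: eq_bigr => j _.
rewrite modn_dvdm ?d_dvd_n // (modn_small (m := 1)) // -modnDmr.
have : (j %% d < d)%N by rewrite ltn_mod; lia.
move: (j %% d)%N => r rd.
case: (ltnP (1 + r) d) => H.
  by rewrite modn_small //; case_nat_tests => //; lia.
have -> : (1 + r = d)%N by lia.
by rewrite modnn; case_nat_tests => //; lia.
Qed.

Lemma wt_indic_le (P : pred nat) (K : nat) (g : nat -> nat) :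
  (forall j, (j < n)%N -> P j -> exists2 k, (k < K)%N & j = g k) -> (wt (indic P) <= K)%N.
Proof.
move=> Pg; rewrite /wt.
apply: (@leq_trans #|[set (inZp (g k) : 'I_n) | k : 'I_K]|); last first.
  by apply: leq_trans (leq_imset_card _ _) _; rewrite card_ord.
apply: subset_leq_card; apply/subsetP => j; rewrite !inE mxE F2_natb_neq0 => Pj.
have [k kK Ej] := Pg j (ltn_ord j) Pj.
apply/imsetP; exists (Ordinal kK) => //; apply: val_inj => /=.
by rewrite -Ej modn_small.
Qed.

Lemma wt_Ldiag : (wt (lsubmx Ldiag) <= h)%N /\ (wt (rsubmx Ldiag) <= h)%N.
Proof.
rewrite row_mxKl row_mxKr; split.
  apply: (@wt_indic_le _ _ (fun k => k * d + 1)%N) => j jn /eqP jd.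
  exists (j %/ d)%N; last by rewrite {1}(divn_eq j d) jd.
  by rewrite ltn_divLR; nia.
apply: (@wt_indic_le _ _ (fun k => k * d)%N) => j jn /eqP jd.
exists (j %/ d)%N; last by rewrite {1}(divn_eq j d) jd addn0.
by rewrite ltn_divLR; nia.
Qed.

Lemma wt_Lline : (wt (lsubmx Lline) <= 1)%N /\ (wt (rsubmx Lline) <= d - 1)%N.
Proof.
rewrite row_mxKl row_mxKr; split.
  by apply: (@wt_indic_le _ _ id) => j jn /eqP ->; exists 0%N.
by apply: (@wt_indic_le _ _ id) => j jn jc; exists j.
Qed.

Lemma wt_Lsparse : (wt (lsubmx Lsparse) <= h.+1)%N /\ (wt (rsubmx Lsparse) <= h - 1)%N.
Proof.
rewrite row_mxKl row_mxKr; split.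
  apply: (@wt_indic_le _ _ (fun k => k * (d - 1))%N) => j jn /andP [/eqP jc jh].
  by exists (j %/ (d - 1))%N; last by rewrite {1}(divn_eq j (d - 1)) jc addn0.
by apply: (@wt_indic_le _ _ id) => j jn jc; exists j.
Qed.

Lemma wt_Mmin : (wt Mmin <= d)%N.
Proof.
rewrite wt_row_mx.
have wl : (wt (indic (fun j => 0 < j < d)%N) <= d - 1)%N.
  apply: (@wt_indic_le _ _ succn) => j jn /andP [j0 jd].
  by exists j.-1; lia.
have wr : (wt (indic (fun j => j == d - 1)%N) <= 1)%N.
  by apply: (@wt_indic_le _ _ (fun=> d - 1)%N) => j jn /eqP ->; exists 0%N.
lia.
Qed.

Lemma sub_HZ_of_orth z :
  z *m HX^T = 0 -> dot z Ldiag = 0 -> dot z Lline = 0 -> (z <= HZ)%MS.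
Proof.
move=> zHX zLdiag zLline.
apply: (@submx_of_orthogonal _ _ _ _ _ HX HZ (col_mx Ldiag Lline) (col_mx Mmin Ldiag)).
- exact: GB_HZ_HX_tr.
- by rewrite mul_col_mx Ldiag_orth_HZ Lline_orth_HZ col_mx0.
- by rewrite mul_col_mx Mmin_orth_HX Ldiag_orth_HX col_mx0.
- by apply: dot_dual_basis;
    rewrite ?dot_Ldiag_Mmin ?dot_Ldiag_Ldiag ?dot_Lline_Mmin ?dot_Lline_Ldiag.
- exact: rank_HX_HZ.
- exact: zHX.
- exact: dot0_mul_tr_col_mx.
Qed.

Lemma sub_HX_of_orth x :
  x *m HZ^T = 0 -> dot x Mmin = 0 -> dot x Ldiag = 0 -> (x <= HX)%MS.
Proof.
move=> xHZ xMmin xLdiag.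
apply: (@submx_of_orthogonal _ _ _ _ _ HZ HX (col_mx Mmin Ldiag) (col_mx Ldiag Lline)).
- exact: GB_HX_HZ_tr.
- by rewrite mul_col_mx Mmin_orth_HX Ldiag_orth_HX col_mx0.
- by rewrite mul_col_mx Ldiag_orth_HZ Lline_orth_HZ col_mx0.
- by apply: dot_dual_basis; rewrite 1?dotC
    ?dot_Ldiag_Mmin ?dot_Lline_Mmin ?dot_Ldiag_Ldiag ?dot_Lline_Ldiag.
- by rewrite [(\rank HZ + _)%N]addnC rank_HX_HZ.
- exact: xHZ.
- exact: dot0_mul_tr_col_mx.
Qed.

Lemma Ldiag_Lline_Lsparse_sub : ((Ldiag + Lline + Lsparse)%R <= HX)%MS.
Proof.
apply: sub_HX_of_orth.
- by rewrite !mulmxDl Ldiag_orth_HZ Lline_orth_HZ Lsparse_orth_HZ !addr0.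
- rewrite dotC !dotDr ![dot Mmin _]dotC dot_Ldiag_Mmin dot_Lline_Mmin dot_Lsparse_Mmin.
  by rewrite addr0 addrr_pchar2 ?pchar_F2.
- rewrite dotC !dotDr [dot Ldiag Lline]dotC [dot Ldiag Lsparse]dotC.
  by rewrite dot_Ldiag_Ldiag dot_Lline_Ldiag dot_Lsparse_Ldiag add0r addrr_pchar2 ?pchar_F2.
Qed.

(* A Z-logical pairs nontrivially with [Ldiag] or with [Lline]; in the second
   case it also pairs with [Lsparse], and the two overlap bounds combine. *)
Lemma wt_logicalZ_ge z : z *m HX^T = 0 -> ~~ (z <= HZ)%MS -> (d <= wt z)%N.
Proof.
move=> zHX zHZ; rewrite -(hsubmxK z) wt_row_mx.
have [zLdiag | [zLdiag0 zLline]] : dot z Ldiag = 1 \/ (dot z Ldiag = 0 /\ dot z Lline = 1).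
  case: (F2_cases (dot z Ldiag)) => zLdiag; last by left.
  case: (F2_cases (dot z Lline)) => zLline; last by right.
  by move/negP: zHZ; case; apply: sub_HZ_of_orth.
- have [wl wr] := wt_Ldiag.
  have := logical_overlap_bound zHX Ldiag_orth_HZ zLdiag wl wr.
  by rewrite -mulnDl => bound; rewrite -(@leq_pmul2r h) -?n_eq //; lia.
have zLsparse : dot z Lsparse = 1.
  have := dot_submx0 zHX Ldiag_Lline_Lsparse_sub.
  by rewrite !dotDr zLdiag0 zLline add0r; case: (F2_cases (dot z Lsparse)) => ->.
have [wl1 wr1] := wt_Lline; have [wl2 wr2] := wt_Lsparse.
apply: (overlap_bounds_sum h_ge2 n_eq).
  exact: logical_overlap_bound zHX Lline_orth_HZ zLline wl1 wr1.
exact: logical_overlap_bound zHX Lsparse_orth_HZ zLsparse wl2 wr2.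
Qed.

Lemma wt_logicalX_ge x : x *m HZ^T = 0 -> ~~ (x <= HX)%MS -> (d <= wt x)%N.
Proof.
move=> xHZ xHX; have [mxHX mxHZ] := mirror_logicalX xHZ xHX.
by rewrite -wt_mirror; apply: wt_logicalZ_ge.
Qed.

Lemma GB_code_params : regular_code HX HZ 4 2 /\ css_params HX HZ (n + n) 2 d.
Proof.
have ne01 : (0 : 'I_n) != 1 by rewrite -val_eqE val_ord1.
have ne0c : (0 : 'I_n) != c_d by rewrite -val_eqE /=; lia.
split; first exact: GB_binom_regular.
split => //; first by rewrite rank_HX rank_HZ; lia.
apply: css_min_distance wt_logicalZ_ge wt_logicalX_ge Mmin_orth_HX _ wt_Mmin.
apply/negP => MminHZ; have := dot_submx0 Ldiag_orth_HZ MminHZ.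
by rewrite dot_Ldiag_Mmin => /eqP; rewrite oner_eq0.
Qed.

End Construction.

(** * Length eight *)

Lemma ord8_mul_eq4 (g : 'I_8) : g != 0 -> exists k, g *+ k = 4.
Proof.
by case: g => [[|[|[|[|[|[|[|[|]]]]]]]] ?] //= _;
  [exists 4%N|exists 2%N|exists 4%N|exists 1%N|exists 4%N|exists 2%N|exists 4%N];
  apply/val_inj.
Qed.

Lemma periodic_mulrn (V : zmodType) (T : Type) (f : V -> T) g :
  (forall l, f (l + g) = f l) -> forall k l, f (l + g *+ k) = f l.
Proof.
move=> fg; elim=> [|k IH] l; first by rewrite mulr0n addr0.
by rewrite mulrS addrA IH fg.
Qed.

Lemma sum_ord8 (F : 'I_8 -> nat) :
  (\sum_k F k = F 0%R + F 1%R + F 2%R + F 3%R + F 4%R + F 5%R + F 6%R + F 7%R)%N.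
Proof.
rewrite (eq_bigr (fun k : 'I_8 => F (inZp k))); last by move=> k _; rewrite valZpK.
rewrite -(big_mkord xpredT (fun i => F (inZp i))) !Zp_nat unlock /= addn0 !addnA.
by do 7 congr (_ + _)%N; congr F; apply/val_inj.
Qed.

Lemma periodic4_window (f : 'I_8 -> F2) : (forall l, f (l + 4) = f l) ->
  forall s, f (0 + s) + f (1 + s) + f (2 + s) + f (3 + s) = f 0 + f 1 + f 2 + f 3.
Proof.
move=> f4 s; rewrite -[s]natr_Zp; elim: (nat_of_ord s) => [|k IH]; first by rewrite !addr0.
rewrite -IH -natr1.
have -> : 3 + (k%:R + 1) = (0 + k%:R) + 4 :> 'I_8.
  by rewrite (_ : 4 = 3 + 1 :> 'I_8); [ring | apply/val_inj].
rewrite f4.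
have -> : 0 + (k%:R + 1) = 1 + k%:R :> 'I_8 by ring.
have -> : 1 + (k%:R + 1) = 2 + k%:R :> 'I_8.
  by rewrite (_ : 2 = 1 + 1 :> 'I_8); [ring | apply/val_inj].
have -> : 2 + (k%:R + 1) = 3 + k%:R :> 'I_8.
  by rewrite (_ : 3 = 2 + 1 :> 'I_8); [ring | apply/val_inj].
ring.
Qed.

Definition pair_sum (w : 'rV[F2]_8) (s t : 'I_8) : 'rV[F2]_8 :=
  \row_k (w 0 (k + s) + w 0 (k + t)).

Lemma sum_addr_ord8 (f : 'I_8 -> F2) s : \sum_k f (k + s) = \sum_k f k.
Proof. by rewrite (reindex_inj (addIr (- s))) /=; apply: eq_bigr => k _; rewrite subrK. Qed.

Lemma pair_sum_even w s t : ~~ odd (wt (pair_sum w s t)).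
Proof.
have : (wt (pair_sum w s t))%:R = 0 :> F2.
  rewrite wt_natr; under eq_bigr => k _ do rewrite mxE.
  by rewrite big_split /= !(sum_addr_ord8 (fun k => w 0 k)) addrr_pchar2 ?pchar_F2.
by rewrite F2_natE; case: (odd _).
Qed.

(* If [w (x^s + x^t) = 0] then [w] is periodic with period [t - s], hence
   with period 4; then so is any [w (x^s' + x^t')], whose weight is thus
   twice an even number. *)
Lemma pair_sum_wt_neq2 w s1 t1 s2 t2 :
  s1 != t1 -> pair_sum w s1 t1 = 0 -> wt (pair_sum w s2 t2) != 2%N.
Proof.
move=> st1 w_st1.
have w_per l : w 0 (l + (t1 - s1)) = w 0 l.
  have := congr1 (fun r : 'rV_8 => r 0 (l - s1)) w_st1; rewrite !mxE.
  by move/F2_add_eq0; rewrite subrK => ->; congr (w 0 _); ring.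
have [k k4] : exists k, (t1 - s1) *+ k = 4 by apply: ord8_mul_eq4; rewrite subr_eq0 eq_sym.
have w_per4 l : w 0 (l + 4) = w 0 l by rewrite -k4 (periodic_mulrn (f := w 0)).
set Y := pair_sum w s2 t2.
have Y_per4 l : Y 0 (l + 4) = Y 0 l.
  by rewrite !mxE -(w_per4 (l + s2)) -(w_per4 (l + t2)); congr (w 0 _ + w 0 _); ring.
have Y_window : Y 0 0 + Y 0 1 + Y 0 2 + Y 0 3 = 0.
  rewrite !mxE.
  transitivity ((w 0 (0 + s2) + w 0 (1 + s2) + w 0 (2 + s2) + w 0 (3 + s2)) +
                (w 0 (0 + t2) + w 0 (1 + t2) + w 0 (2 + t2) + w 0 (3 + t2))).
    by rewrite ![_ + s2]addrC ![_ + t2]addrC; ring.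
  by rewrite !(periodic4_window w_per4) addrr_pchar2 ?pchar_F2.
rewrite /wt card_set_sum sum_ord8.
have Y4 (i j : 'I_8) : j == i + 4 -> Y 0 j = Y 0 i by move/eqP ->; apply: Y_per4.
rewrite (Y4 0 4) // (Y4 1 5) // (Y4 2 6) // (Y4 3 7) //.
move: Y_window; rewrite [Y 0 0]F2_nneqE [Y 0 1]F2_nneqE [Y 0 2]F2_nneqE [Y 0 3]F2_nneqE.
rewrite -!natrD F2_natE.
by case: (Y 0 0 != 0); case: (Y 0 1 != 0); case: (Y 0 2 != 0); case: (Y 0 3 != 0).
Qed.

Lemma even_lt4 k : ~~ odd k -> (k < 4)%N -> k = 0%N \/ k = 2%N.
Proof. by case: k => [|[|[|[|]]]]; auto. Qed.

Lemma pair_sums_light w s1 t1 s2 t2 : s1 != t1 -> s2 != t2 ->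
  (wt (pair_sum w s1 t1) + wt (pair_sum w s2 t2) < 4)%N ->
  pair_sum w s1 t1 = 0 /\ pair_sum w s2 t2 = 0.
Proof.
move=> st1 st2 light.
have [lt1 lt2] : (wt (pair_sum w s1 t1) < 4 /\ wt (pair_sum w s2 t2) < 4)%N by lia.
have [] := even_lt4 (pair_sum_even w s1 t1) lt1 => wt1.
  have y1 := wt_eq0 wt1; split => //; apply: wt_eq0.
  have [] := even_lt4 (pair_sum_even w s2 t2) lt2 => // wt2.
  by move: (pair_sum_wt_neq2 s2 t2 st1 y1); rewrite wt2.
have [] := even_lt4 (pair_sum_even w s2 t2) lt2 => wt2; last by move: light; rewrite wt1 wt2.
by move: (pair_sum_wt_neq2 s1 t1 st2 (wt_eq0 wt2)); rewrite wt1.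
Qed.

Lemma mul_circ_pair_sum w s t :
  w *m circ (monomial s + monomial t) = pair_sum w (- s) (- t).
Proof. by apply/rowP => j; rewrite mul_circ_binom mxE. Qed.

Lemma mul_tr_circ_pair_sum w s t :
  w *m (circ (monomial s + monomial t))^T = pair_sum w s t.
Proof. by apply/rowP => j; rewrite mul_tr_circ_binom mxE. Qed.

Lemma GB8_nondegenerate (s t s' t' : 'I_8) : s != t -> s' != t' ->
  ~ degenerate (GB_HX (monomial s + monomial t) (monomial s' + monomial t'))
               (GB_HZ (monomial s + monomial t) (monomial s' + monomial t')) 4.
Proof.
move=> st st' [x [z [[xHX zHZ] [nz wt_lt4]]]].
have neqN (i j : 'I_8) : i != j -> - i != - j by rewrite (inj_eq oppr_inj).
case: nz => /eqP; apply.
  case/submxP: xHX => w xE; have := leq_ltn_trans (wt_le_pauli_weightl x z) wt_lt4.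
  rewrite xE mul_GB_HX !mul_circ_pair_sum wt_row_mx => light.
  by have [-> ->] := pair_sums_light (neqN _ _ st) (neqN _ _ st') light; rewrite row_mx0.
case/submxP: zHZ => w zE; have := leq_ltn_trans (wt_le_pauli_weightr x z) wt_lt4.
rewrite zE mul_GB_HZ !mul_tr_circ_pair_sum wt_row_mx => light.
by have [-> ->] := pair_sums_light st' st light; rewrite row_mx0.
Qed.

Lemma GB8_regular_nondegenerate (a b : 'rV[F2]_8) :
  regular_code (GB_HX a b) (GB_HZ a b) 4 2 -> ~ degenerate (GB_HX a b) (GB_HZ a b) 4.
Proof.
move=> /regular_GB_wt [/wt2_binom [s [t [st ->]]] /wt2_binom [s' [t' [st' ->]]]].
exact: GB8_nondegenerate.
Qed.

Lemma GB_code_exists h : (2 <= h)%N ->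
  exists a b : 'rV[F2]_(2 * h * h),
    regular_code (GB_HX a b) (GB_HZ a b) 4 2 /\
    css_params (GB_HX a b) (GB_HZ a b) ((2 * h) ^ 2) 2 (2 * h).
Proof.
move=> h_ge2; have n_eq : (2 * h * h - 2).+2 = (2 * h * h)%N by nia.
have [reg css] := GB_code_params h_ge2 n_eq.
rewrite -n_eq; exists (monomial 0 + monomial 1), (monomial 0 + monomial (c_d h_ge2 n_eq)).
by have -> : ((2 * h) ^ 2 = (2 * h * h - 2).+2 + (2 * h * h - 2).+2)%N by nia.
Qed.

(* The statement is read in [nat_scope], where [d ^ 2] is [expn]. *)
Local Close Scope ring_scope.

Theorem theorem8 (d : nat) :
  (4 <= d)%N -> ~~ odd d ->
  (exists a b : 'rV['F_2]_((d ^ 2)./2),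
      regular_code (GB_HX a b) (GB_HZ a b) 4 2 /\
      css_params (GB_HX a b) (GB_HZ a b) (d ^ 2) 2 d) /\
  (forall a b : 'rV['F_2]_((d ^ 2)./2),
      regular_code (GB_HX a b) (GB_HZ a b) 4 2 ->
      css_params (GB_HX a b) (GB_HZ a b) (d ^ 2) 2 d ->
      (degenerate (GB_HX a b) (GB_HZ a b) d <-> d <> 4%N)).
Proof.
move=> d_ge4 d_even.
have [h d_eq] : exists h, d = (2 * h)%N.
  by exists d./2; rewrite -{1}(odd_double_half d) (negbTE d_even) add0n mul2n.
have h_ge2 : (2 <= h)%N by lia.
have -> : ((d ^ 2)./2 = 2 * h * h)%N.
  by rewrite d_eq -[(2 * h * h)%N]doubleK -mul2n; congr half; lia.
split; first by rewrite d_eq; exact: GB_code_exists.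
move=> a b reg _; split => [degen d4 | d_neq4]; last by apply: regular_degenerate reg _; nia.
have h2 : h = 2%N by lia.
by move: a b reg degen; rewrite h2 d4 => a b reg; apply: GB8_regular_nondegenerate.
Qed.
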